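(* Let $M\in M_n(\mathbb{Z})$ and let $\mu$ be an integer such that $M$ is $\mu$-collapsed. Then $|\mu|\le\|M\|+\sqrt2$. If moreover no column vector of $M-\mu\,\mathrm{Id}$ equals a vector $E_{ij}=e_i-e_j$ with $i\neq j$, then $|\mu|\le\|M\|+1$.
   Context: For $M\in M_n(\mathbb{Z})$, $\mathrm{Im}(M)$ is the $\mathbb{Z}$-span of its columns; $M$ is spread if the quotient map $\mathbb{Z}^n\to\mathbb{Z}^n/\mathrm{Im}(M)$ is injective on the standard basis $\{e_1,\dots,e_n\}$, and $M$ is $\mu$-collapsed if $M-\mu\,\mathrm{Id}$ is not spread. $\|M\|$ denotes the operator norm $\max_{\|v\|=1}\|Mv\|$ with respect to the Euclidean norm. *)

From HB Require Import structures.
From mathcomp Require Import all_boot all_order all_algebra.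
From mathcomp Require Import all_classical all_reals.
Set Implicit Arguments. Unset Strict Implicit. Unset Printing Implicit Defensive.
Import Order.TTheory GRing.Theory Num.Theory.
Local Open Scope ring_scope.
Local Open Scope classical_set_scope.

Definition inIm (n : nat) (M : 'M[int]_n) (v : 'cV[int]_n) : Prop :=
  exists x : 'cV[int]_n, M *m x = v.

Definition ebasis (n : nat) (i : 'I_n) : 'cV[int]_n := delta_mx i 0.

(* M is spread: the quotient map Z^n -> Z^n / Im(M) is injective on the
   standard basis, i.e. e_i = e_j mod Im(M) implies i = j. *)
Definition spread (n : nat) (M : 'M[int]_n) : Prop :=
  forall i j : 'I_n, inIm M (ebasis i - ebasis j) -> i = j.

Definition collapsed (n : nat) (M : 'M[int]_n) (mu : int) : Prop :=
  ~ spread (M - mu%:M).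

Definition enorm (R : realType) (n : nat) (v : 'cV[R]_n) : R :=
  Num.sqrt (\sum_i (v i 0) ^+ 2).

Definition opnorm (R : realType) (n : nat) (M : 'M[R]_n) : R :=
  sup [set enorm (M *m v) | v in [set v : 'cV[R]_n | enorm v = 1]].

Definition mxZR (R : realType) (n : nat) (M : 'M[int]_n) : 'M[R]_n :=
  map_mx (fun z : int => z%:~R) M.

From mathcomp Require Import all_boot all_order all_algebra.
From mathcomp Require Import all_classical all_reals.
From mathcomp Require Import ring lra zify.
Set Implicit Arguments. Unset Strict Implicit. Unset Printing Implicit Defensive.
Import Order.TTheory GRing.Theory Num.Theory.
Local Open Scope ring_scope.

(* If (M - mu) x = e_i - e_j with x in Z^n, then M x = mu x + e_i - e_j, so
   |M x|^2 = mu^2 |x|^2 + 2 mu (x_i - x_j) + 2.  Since (x_i - x_j)^2 <= 2 |x|^2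
   and |x|^2 is a positive integer (so either 1 or at least 2), this is at
   least (|mu| - 1)^2 |x|^2, whence ||M|| >= |M x| / |x| >= |mu| - 1.  This is
   the bound with 1 in place of sqrt 2, for every collapsed M. *)

Definition sqnorm (R : pzSemiRingType) (n : nat) (v : 'cV[R]_n) : R :=
  \sum_i v i 0 ^+ 2.

Lemma sqnorm_map (R S : pzSemiRingType) (f : {rmorphism R -> S}) n
    (v : 'cV[R]_n) :
  sqnorm (map_mx f v) = f (sqnorm v).
Proof.
by rewrite /sqnorm rmorph_sum; apply: eq_bigr => i _; rewrite mxE rmorphXn.
Qed.

Lemma sqnorm_split2 (R : pzSemiRingType) n (v : 'cV[R]_n) (i j : 'I_n) :
  i != j ->
  sqnorm v =
  v i 0 ^+ 2 + v j 0 ^+ 2 + \sum_(k | (k != i) && (k != j)) v k 0 ^+ 2.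
Proof.
by move=> ij; rewrite /sqnorm (bigD1 i) //= (bigD1 j) 1?eq_sym //= addrA.
Qed.

Lemma sqnorm_scale_add_delta (R : comPzRingType) n (c : R) (x : 'cV[R]_n) i j :
  i != j ->
  sqnorm (c *: x + (delta_mx i 0 - delta_mx j 0)) =
  c ^+ 2 * sqnorm x + 2 * c * (x i 0 - x j 0) + 2.
Proof.
move=> ij; rewrite !(sqnorm_split2 _ ij) !mxE !eqxx /= !andbT.
rewrite (negbTE ij) eq_sym (negbTE ij).
under eq_bigr => k /andP [/negbTE ki /negbTE kj] do
  rewrite !mxE ki kj /= subr0 addr0 exprMn.
rewrite -mulr_sumr subr0 sub0r; ring.
Qed.

Section SqnormReal.
Variables (R : realDomainType) (n : nat).
Implicit Types x : 'cV[R]_n.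

Lemma sqnorm_ge0 x : 0 <= sqnorm x.
Proof. by apply: sumr_ge0 => i _; exact: sqr_ge0. Qed.

Lemma sqnorm_eq0 x : (sqnorm x == 0) = (x == 0).
Proof.
apply/idP/eqP => [/eqP x0 | ->]; last first.
  by rewrite /sqnorm big1 // => i _; rewrite mxE expr0n.
apply/matrixP => i k; rewrite (ord1 k) mxE; apply/eqP; rewrite -sqrf_eq0.
by apply/eqP; apply: (psumr_eq0P (fun l _ => sqr_ge0 (x l 0)) x0).
Qed.

Lemma sqr_coord_le_sqnorm x i : x i 0 ^+ 2 <= sqnorm x.
Proof.
by rewrite /sqnorm (bigD1 i) //= lerDl; apply: sumr_ge0 => k _; exact: sqr_ge0.
Qed.

Lemma sqr_coordB_le_sqnorm x i j :
  i != j -> (x i 0 - x j 0) ^+ 2 <= 2 * sqnorm x.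
Proof.
move=> ij; rewrite (sqnorm_split2 _ ij).
have rest0 : 0 <= \sum_(k | (k != i) && (k != j)) x k 0 ^+ 2.
  by apply: sumr_ge0 => k _; exact: sqr_ge0.
have := sqr_ge0 (x i 0 + x j 0); nra.
Qed.

End SqnormReal.

Lemma sqnorm_int_ge1 n (x : 'cV[int]_n) : x != 0 -> 1 <= sqnorm x.
Proof. by move=> x0; rewrite -gtz0_ge1 lt_def sqnorm_eq0 x0 sqnorm_ge0. Qed.

(* Used with m = |mu|, k = |x_i - x_j|, s = |x|^2.  Integrality is essential:
   over the reals it fails for 1 <= s < 2, k = sqrt (2 s) and m large. *)
Lemma sqr_subr1_mul_le_int (m k s : int) :
  1 <= m -> 0 <= k -> 1 <= s -> k ^+ 2 <= 2 * s ->
  (m - 1) ^+ 2 * s <= m ^+ 2 * s - 2 * (m * k) + 2.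
Proof.
move=> m1 k0 s1 ks.
have [s_gt1|s_le1] := ltrP 1 s.
  have : 2 * k <= s + 2 by nia.
  nia.
have -> : s = 1 by lia.
have : k <= 1 by nia.
nia.
Qed.

Lemma not_spread_witness n (A : 'M[int]_n) : ~ spread A ->
  exists i j (x : 'cV[int]_n), i != j /\ A *m x = ebasis i - ebasis j.
Proof.
apply: contra_notP => nex i j [x Ax].
by case: (eqVneq i j) => // ij; case: nex; exists i, j, x.
Qed.

Lemma mulmx_eq_ebasisB_neq0 n (B : 'M[int]_n) (x : 'cV[int]_n) i j :
  i != j -> B *m x = ebasis i - ebasis j -> x != 0.
Proof.
move=> ij Bx; apply/eqP => x0; move/matrixP/(_ i 0): Bx.
by rewrite x0 mulmx0 !mxE !eqxx (negbTE ij) /= subr0.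
Qed.

Lemma collapsed_sqnorm_ge n (A : 'M[int]_n) (mu : int) (x : 'cV[int]_n) i j :
  i != j -> (A - mu%:M) *m x = ebasis i - ebasis j -> 1 <= `|mu| ->
  (`|mu| - 1) ^+ 2 * sqnorm x <= sqnorm (A *m x).
Proof.
move=> ij Ax mu1; have x0 := mulmx_eq_ebasisB_neq0 ij Ax.
have -> : A *m x = mu *: x + (ebasis i - ebasis j).
  by rewrite -Ax mulmxBl mul_scalar_mx addrC subrK.
rewrite sqnorm_scale_add_delta //.
have coordB_sqr := sqr_coordB_le_sqnorm x ij.
rewrite -real_normK ?num_real // in coordB_sqr.
have := sqr_subr1_mul_le_int mu1 (normr_ge0 _) (sqnorm_int_ge1 x0) coordB_sqr.
have : - (mu * (x i 0 - x j 0)) <= `|mu| * `|x i 0 - x j 0|.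
  by rewrite -normrM -normrN ler_norm.
rewrite -(real_normK (num_real mu)); lra.
Qed.

Section EuclideanNorm.
Variables (R : realType) (n : nat).
Implicit Types (v : 'cV[R]_n) (A : 'M[R]_n).

Lemma enorm_sqr v : enorm v ^+ 2 = sqnorm v.
Proof. exact/sqr_sqrtr/sqnorm_ge0. Qed.

Lemma enorm_ge0 v : 0 <= enorm v.
Proof. exact: sqrtr_ge0. Qed.

Lemma enormZ (c : R) v : enorm (c *: v) = `|c| * enorm v.
Proof.
rewrite /enorm; under eq_bigr do rewrite mxE exprMn.
by rewrite -mulr_sumr sqrtrM ?sqr_ge0 // sqrtr_sqr.
Qed.

Lemma has_ubound_opnorm A :
  has_ubound [set enorm (A *m v) | v in [set v | enorm v = 1]].
Proof.
exists (Num.sqrt (\sum_i (\sum_k `|A i k|) ^+ 2)) => _ [v /= v1 <-].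
have coord_le1 k : `|v k 0| <= 1.
  rewrite -(expr_le1 (n := 2)) // real_normK ?num_real //.
  by rewrite -(expr1n _ 2) -v1 enorm_sqr sqr_coord_le_sqnorm.
rewrite /enorm ler_sqrt; last by apply: sumr_ge0 => i _; exact: sqr_ge0.
apply: ler_sum => i _.
rewrite -real_normK ?num_real // ler_pXn2r ?nnegrE //; last first.
  by apply: sumr_ge0 => k _; exact: normr_ge0.
rewrite mxE; apply: (le_trans (ler_norm_sum _ _ _)); apply: ler_sum => k _.
by rewrite normrM ler_piMr.
Qed.

Lemma enorm_mulmx_le A v : 0 < enorm v -> enorm (A *m v) <= opnorm A * enorm v.
Proof.
move=> v_gt0; rewrite -ler_pdivrMr //.
have -> : enorm (A *m v) / enorm v = enorm (A *m ((enorm v)^-1 *: v)).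
  by rewrite -scalemxAr enormZ ger0_norm ?invr_ge0 ?ltW // mulrC.
apply: ub_le_sup; first exact: has_ubound_opnorm.
exists ((enorm v)^-1 *: v) => //=.
by rewrite enormZ ger0_norm ?invr_ge0 ?ltW // mulVf // gt_eqF.
Qed.

End EuclideanNorm.

Lemma opnorm_ge_collapsed (R : realType) n (A : 'M[int]_n) (mu : int) :
  collapsed A mu -> `|mu%:~R : R| - 1 <= opnorm (mxZR R A).
Proof.
case/not_spread_witness => i [j [x [ij Ax]]].
have x0 := mulmx_eq_ebasisB_neq0 ij Ax.
pose xr : 'cV[R]_n := map_mx intr x.
have xr_sqr : enorm xr ^+ 2 = (sqnorm x)%:~R by rewrite enorm_sqr sqnorm_map.
have Axr_sqr : enorm (mxZR R A *m xr) ^+ 2 = (sqnorm (A *m x))%:~R.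
  by rewrite /mxZR -map_mxM enorm_sqr sqnorm_map.
have xr_gt0 : 0 < enorm xr.
  rewrite /enorm sqrtr_gt0 -/(sqnorm xr) -enorm_sqr xr_sqr ltr0z gtz0_ge1.
  exact: sqnorm_int_ge1.
have lower : (`|mu%:~R : R| - 1) * enorm xr <= enorm (mxZR R A *m xr).
  have [mu1|mu_lt1] := lerP 1 `|mu|; last first.
    apply: le_trans (enorm_ge0 _); rewrite pmulr_lle0 // subr_le0.
    by rewrite -intr_norm lerz1 ltW.
  have mu1R : 1 <= `|mu%:~R : R| by rewrite -intr_norm ler1z.
  suff : ((`|mu%:~R : R| - 1) * enorm xr) ^+ 2 <= enorm (mxZR R A *m xr) ^+ 2.
    have := enorm_ge0 (mxZR R A *m xr); have := enorm_ge0 xr; nra.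
  rewrite exprMn xr_sqr Axr_sqr -intr_norm -[1]/(1%:~R).
  rewrite -rmorphB -rmorphXn -rmorphM ler_int.
  exact: collapsed_sqnorm_ge Ax mu1.
by rewrite -(ler_pM2r xr_gt0) (le_trans lower) // enorm_mulmx_le.
Qed.

Theorem proposition3p3 (R : realType) (n : nat) (M : 'M[int]_n) (mu : int) :
  collapsed M mu ->
  `|(mu%:~R : R)| <= opnorm (mxZR R M) + Num.sqrt 2 /\
  ((forall j i k : 'I_n, i != k ->
      col j (M - mu%:M) != ebasis i - ebasis k) ->
   `|(mu%:~R : R)| <= opnorm (mxZR R M) + 1).
Proof.
move=> Mmu.
have mu_le := opnorm_ge_collapsed R Mmu.
have sqrt2_ge1 : 1 <= Num.sqrt (2 : R) by rewrite -{1}sqrtr1 ler_sqrt // ler1n.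
by split=> [|_]; lra.
Qed.
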